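(* Let $Q$ be a prime quiver with $\chi(Q)\ge2$ such that $(Q,0)$ is tight. (i) For every vertex $v\in Q_0$ we have $|\{a\in Q_1\mid a^-=v\}|\ge2$ and $|\{a\in Q_1\mid a^+=v\}|\ge2$. (ii) $|Q_0|\le\chi(Q)-1$, and consequently $|Q_1|=|Q_0|+\chi(Q)-1\le2(\chi(Q)-1)$.
   Context: A quiver $Q$: vertices $Q_0$, arrows $Q_1$, $a$ from $a^-$ to $a^+$ (loops, multiple arrows, oriented cycles allowed). $\chi(Q)=|Q_1|-|Q_0|+(\text{number of connected components of the underlying graph})$. $Q$ is prime if its underlying graph is connected, has at least one edge, and is not the union of two full proper subgraphs having exactly one common vertex. For $\theta\in\mathbb{Z}^{Q_0}$, $\nabla(Q,\theta)=\{x\in\mathbb{R}_{\ge0}^{Q_1}\mid\forall v:\ \theta(v)=\sum_{a^+=v}x(a)-\sum_{a^-=v}x(a)\}$. Integral-affine equivalence of lattice polyhedra: an affine isomorphism of affine spans mapping lattice points of the span onto lattice points of the span and the polyhedron onto the polyhedron. An arrow $a$ is removable if $\nabla(Q,\theta)$ is integral-affinely equivalent to $\nabla(Q',\theta)$, $Q'$ being $Q$ with $a$ deleted; contracting a non-loop arrow $a$ gives $(\hat Q,\hat\theta)$ (delete $a$, glue $a^\pm$ into one vertex $v$, $\hat\theta(v)=\theta(a^-)+\theta(a^+)$, $\hat\theta=\theta$ elsewhere), and $a$ is contractable if $\nabla(Q,\theta)$ is integral-affinely equivalent to $\nabla(\hat Q,\hat\theta)$. $(Q,\theta)$ is tight if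 no arrow is removable or contractable. *)

From HB Require Import structures.
From mathcomp Require Import all_boot all_order all_algebra.
From mathcomp Require Import reals.

Set Implicit Arguments.
Unset Strict Implicit.
Unset Printing Implicit Defensive.

Import Order.TTheory GRing.Theory Num.Theory.
Local Open Scope ring_scope.

(** A finite quiver: vertices Q0, arrows Q1, arrow a goes from src a = a^- to tgt a = a^+.
    Loops, multiple arrows and oriented cycles are allowed. *)
Record quiver := Quiver {
  vert : finType;
  arr : finType;
  src : arr -> vert;
  tgt : arr -> vert }.

Definition uadj (Q : quiver) : rel (vert Q) :=
  fun u v => [exists a : arr Q, ((src a == u) && (tgt a == v)) || ((src a == v) && (tgt a == u))].

Arguments uadj : clear implicits.

Definition ncomp (Q : quiver) : nat := n_comp (uadj Q) predT.

Definition chi (Q : quiver) : int :=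
  (#|arr Q|%:Z - #|vert Q|%:Z + (ncomp Q)%:Z)%R.

(** A full subgraph
    is determined by its vertex set S (it contains all arrows with both ends in S). *)
Definition prime_quiver (Q : quiver) : Prop :=
  (forall u v : vert Q, connect (uadj Q) u v) /\
  (0 < #|arr Q|)%N /\
  ~ (exists S1 S2 : {set vert Q},
        [/\ S1 != setT, S2 != setT, S1 :|: S2 = setT,
            #|S1 :&: S2| = 1%N &
            forall a : arr Q, (src a \in S1) && (tgt a \in S1) || (src a \in S2) && (tgt a \in S2)]).

Definition nabla (R : realType) (Q : quiver) (theta : vert Q -> int) (x : arr Q -> R) : Prop :=
  (forall a, 0 <= x a) /\
  (forall v : vert Q, (theta v)%:~R = \sum_(a | tgt a == v) x a - \sum_(a | src a == v) x a).

Definition affine_comb (R : realType) (I : Type) (n : nat) (lam : 'I_n -> R)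
  (p : 'I_n -> I -> R) : I -> R := fun k => \sum_(i < n) lam i * p i k.

Definition aff_hull (R : realType) (I : Type) (P : (I -> R) -> Prop) (x : I -> R) : Prop :=
  exists n (lam : 'I_n -> R) (p : 'I_n -> I -> R),
    [/\ forall i, P (p i), \sum_(i < n) lam i = 1 & x = affine_comb lam p].

Definition lattice_pt (R : realType) (I : Type) (x : I -> R) : Prop :=
  exists z : I -> int, forall k, x k = (z k)%:~R.

Definition int_aff_equiv (R : realType) (I J : Type)
  (P : (I -> R) -> Prop) (P' : (J -> R) -> Prop) : Prop :=
  exists f : (I -> R) -> (J -> R),
    [/\
        (forall n (lam : 'I_n -> R) (p : 'I_n -> I -> R),
            (forall i, aff_hull P (p i)) -> \sum_(i < n) lam i = 1 ->
            f (affine_comb lam p) = affine_comb lam (fun i => f (p i))),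
        (forall x, aff_hull P x -> aff_hull P' (f x)),
        (forall x y, aff_hull P x -> aff_hull P y -> f x = f y -> x = y),
        (forall y, aff_hull P' y -> exists2 x, aff_hull P x & f x = y) &
        (forall x, aff_hull P x -> (lattice_pt x <-> lattice_pt (f x)))] /\
        (forall x, aff_hull P x -> (P x <-> P' (f x))).

Definition del_arr (Q : quiver) (a : arr Q) : quiver :=
  @Quiver (vert Q) {b : arr Q | b != a}
          (fun b => src (val b)) (fun b => tgt (val b)).

(** Contracting a non-loop arrow a: delete a and glue tgt a into src a.
    The new vertex set is Q0 \ {a^+}; the glued vertex is represented by a^-. *)
Section Contract.
Variables (Q : quiver) (a : arr Q) (H : src a != tgt a).

Definition cvert := {v : vert Q | v != tgt a}.
Definition glue_pt : cvert := exist _ (src a) H.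
Definition glue (v : vert Q) : cvert := insubd glue_pt v.

Definition contr_arr : quiver :=
  @Quiver cvert {b : arr Q | b != a}
          (fun b => glue (src (val b))) (fun b => glue (tgt (val b))).

Definition contr_theta (theta : vert Q -> int) (w : cvert) : int :=
  if val w == src a then (theta (src a) + theta (tgt a))%R else theta (val w).
End Contract.

Definition removable (R : realType) (Q : quiver) (theta : vert Q -> int) (a : arr Q) : Prop :=
  int_aff_equiv (@nabla R Q theta) (@nabla R (del_arr a) theta).

Definition contractable (R : realType) (Q : quiver) (theta : vert Q -> int) (a : arr Q) : Prop :=
  exists H : src a != tgt a,
    int_aff_equiv (@nabla R Q theta) (@nabla R (contr_arr H) (@contr_theta Q a theta)).

Definition tight (R : realType) (Q : quiver) (theta : vert Q -> int) : Prop :=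
  forall a : arr Q, ~ removable R theta a /\ ~ contractable R theta a.

(** With [theta = 0] the points of [nabla] are the nonnegative circulations.
    Suppose a vertex [v] has at most one outgoing arrow.  If some outgoing arrow
    [a] of [v] is not a loop, [v] has exactly that one, so conservation at [v]
    writes [x a] as the total flow entering [v]; substituting this expression
    identifies [nabla Q] with the flow polytope of the contraction of [a].  If all
    outgoing arrows of [v] are loops, conservation at [v] forces every other
    arrow entering [v] to carry no flow, so it is removable.  Tightness thus
    leaves only the case that no arrow joins [v] to another vertex; then [Q] is
    a single vertex carrying at most one arrow and [chi Q <= 1].  The same
    argument applies to incoming arrows, and (ii) follows from (i) by counting
    arrows by their sources, since [chi Q = |Q1| - |Q0| + 1]. *)

From HB Require Import structures.
From mathcomp Require Import all_boot all_order all_algebra.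
From mathcomp Require Import reals zify.
From Stdlib Require Import FunctionalExtensionality.
Import Order.TTheory GRing.Theory Num.Theory.
Local Open Scope ring_scope.
Set Implicit Arguments. Unset Strict Implicit. Unset Printing Implicit Defensive.

Lemma sumr_sig_neq (V : nmodType) (T : finType) (a : T) (P : pred T) (x : T -> V) :
  \sum_(b | P b) x b =
  \sum_(c : {b : T | b != a} | P (val c)) x (val c) + (if P a then x a else 0).
Proof.
rewrite (bigID (fun b => b == a)) /= addrC; congr (_ + _).
  rewrite (reindex_omap (val : {b : T | b != a} -> T) insub); last first.
    by move=> i /andP[_ ia]; rewrite insubT.
  by apply: eq_bigl => -[i ia] /=; rewrite insubT /= ia eqxx !andbT.
case: ifP => Pa.
  by apply: big_pred1 => b /=; case: eqP => [->|]; rewrite ?Pa ?andbF.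
by apply: big_pred0 => b; case: eqP => [->|]; rewrite ?Pa ?andbF.
Qed.

Section IntAffEquiv.
Variables (R : realType) (I J : Type).

Lemma int_aff_equiv_of_inverse (P : (I -> R) -> Prop) (P' : (J -> R) -> Prop)
    (f : (I -> R) -> (J -> R)) (g : (J -> R) -> (I -> R)) :
  (forall n (lam : 'I_n -> R) p,
      f (affine_comb lam p) = affine_comb lam (fun i => f (p i))) ->
  (forall n (lam : 'I_n -> R) p,
      g (affine_comb lam p) = affine_comb lam (fun i => g (p i))) ->
  (forall x, P x -> P' (f x)) -> (forall y, P' y -> P (g y)) ->
  (forall x, P x -> g (f x) = x) -> (forall y, P' y -> f (g y) = y) ->
  (forall x, lattice_pt x -> lattice_pt (f x)) ->
  (forall y, lattice_pt y -> lattice_pt (g y)) ->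
  int_aff_equiv P P'.
Proof.
move=> fl gl fP gP gf fg fL gL.
have gfA x : aff_hull P x -> g (f x) = x.
  move=> [n [lam [p [Pp _ ->]]]]; rewrite fl gl.
  by congr affine_comb; apply: functional_extensionality_dep => i; rewrite gf.
have fgA y : aff_hull P' y -> f (g y) = y.
  move=> [n [lam [p [Pp _ ->]]]]; rewrite gl fl.
  by congr affine_comb; apply: functional_extensionality_dep => i; rewrite fg.
exists f; split; first split.
- by move=> n lam p _ _; rewrite fl.
- move=> x [n [lam [p [Pp s1 ->]]]]; rewrite fl.
  by exists n, lam, (fun i => f (p i)); split=> // i; apply: fP.
- by move=> x y hx hy fxy; rewrite -(gfA x hx) -(gfA y hy) fxy.
- move=> y hy; exists (g y); last exact: fgA.
  move: hy => [n [lam [p [Pp s1 ->]]]]; rewrite gl.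
  by exists n, lam, (fun i => g (p i)); split=> // i; apply: gP.
- by move=> x hx; split=> [|/gL]; [apply: fL | rewrite gfA].
- by move=> x hx; split=> [|/gP]; [apply: fP | rewrite gfA].
Qed.

End IntAffEquiv.

Section Flows.
Variables (R : realType) (Q : quiver).

Definition net (x : arr Q -> R) (v : vert Q) : R :=
  \sum_(b | tgt b == v) x b - \sum_(b | src b == v) x b.

Lemma removable_of_vanishing (theta : vert Q -> int) (b : arr Q) :
  (forall x : arr Q -> R, nabla theta x -> x b = 0) -> removable R theta b.
Proof.
move=> x_b0.
pose f (x : arr Q -> R) (c : arr (del_arr b)) := x (val c).
pose g (y : arr (del_arr b) -> R) (c : arr Q) := oapp y 0 (insub c : option {c | c != b}).
have gval y c : g y (val c) = y c by rewrite /g valK.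
have gb y : g y b = 0 by rewrite /g insubF ?eqxx.
have sum_g y (P : pred (arr Q)) :
    \sum_(c | P c) g y c = \sum_(c : arr (del_arr b) | P (val c)) y c.
  by rewrite (sumr_sig_neq b) gb if_same addr0; apply: eq_bigr => c _; rewrite gval.
apply: (int_aff_equiv_of_inverse (f := f) (g := g)) => //.
- move=> n lam p; apply: functional_extensionality_dep => c.
  rewrite /g /affine_comb; case: (insub c) => //=.
  by rewrite big1 // => i _; rewrite mulr0.
- move=> x [x0 cx]; split=> [c|v]; first exact: x0.
  by rewrite cx !(sumr_sig_neq b) (x_b0 x) ?if_same ?addr0.
- move=> y [y0 cy]; split=> [c|v].
    by rewrite /g; case: (insub c) => /=.
  by rewrite (sum_g y (fun c => tgt c == v)) (sum_g y (fun c => src c == v)) cy.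
- move=> x hx; apply: functional_extensionality_dep => c.
  by rewrite /g /f; case: insubP => [c' _ <- //| /negPn/eqP ->]; rewrite (x_b0 x hx).
- by move=> y _; apply: functional_extensionality_dep => c; rewrite /f gval.
- by move=> x [z hz]; exists (fun c => z (val c)) => c; rewrite /f hz.
- move=> y [z hz]; exists (fun c => oapp z 0%:Z (insub c : option {c | c != b})) => c.
  by rewrite /g; case: (insub c) => /=.
Qed.

End Flows.

Section Contraction.
Variables (R : realType) (Q : quiver) (a : arr Q) (H : src a != tgt a).

Lemma val_glue (u : vert Q) : val (glue H u) = if u == tgt a then src a else u.
Proof.
rewrite /glue /insubd; case: insubP => [u' hu ->|/negPn/eqP->]; last by rewrite eqxx.
by move: hu => /= /negPf ->.
Qed.

Lemma glue_tgt : glue H (tgt a) = glue_pt H.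
Proof. by apply: val_inj; rewrite val_glue eqxx. Qed.

Lemma glue_src : glue H (src a) = glue_pt H.
Proof. by apply: val_inj; rewrite val_glue (negPf H). Qed.

Lemma sum_glue_fibre_pt (n : vert Q -> R) :
  \sum_(u | glue H u == glue_pt H) n u = n (src a) + n (tgt a).
Proof.
rewrite (bigD1 (src a)) /=; last by rewrite glue_src.
rewrite (bigD1 (tgt a)) /=; last by rewrite glue_tgt eqxx eq_sym.
rewrite big_pred0 ?addr0 // => u; case: eqP => // /(congr1 val); rewrite val_glue /=.
by case: (u =P tgt a) => [->|_ ->]; rewrite ?eqxx ?andbF.
Qed.

Lemma sum_glue_fibre (n : vert Q -> R) (u : vert Q) :
  u != src a -> u != tgt a -> \sum_(u' | glue H u' == glue H u) n u' = n u.
Proof.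
move=> us ut; apply: big_pred1 => u' /=; apply/eqP/eqP => [/(congr1 val)|->//].
rewrite !val_glue (negPf ut); case: ifP => // _ e.
by rewrite e eqxx in us.
Qed.

Lemma net_contr (x : arr Q -> R) (w : cvert a) :
  net (fun c : arr (contr_arr H) => x (val c)) w = \sum_(u | glue H u == w) net x u.
Proof.
pose xa := if glue_pt H == w then x a else 0.
have e_in : \sum_(c : arr (contr_arr H) | tgt c == w) x (val c) =
            \sum_(b | glue H (tgt b) == w) x b - xa.
  by rewrite (sumr_sig_neq a) glue_tgt addrK.
have e_out : \sum_(c : arr (contr_arr H) | src c == w) x (val c) =
             \sum_(b | glue H (src b) == w) x b - xa.
  by rewrite (sumr_sig_neq a) glue_src addrK.
rewrite /net e_in e_out opprB addrA subrK sumrB.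
rewrite (partition_big (@tgt Q) (fun u => glue H u == w)) //=.
rewrite [X in _ - X](partition_big (@src Q) (fun u => glue H u == w)) //=.
congr (_ - _); apply: eq_bigr => u hu; apply: eq_bigl => b.
  by case: (tgt b =P u) => [->|]; rewrite ?hu ?andbF.
by case: (src b =P u) => [->|]; rewrite ?hu ?andbF.
Qed.

Lemma contr_theta0 (w : cvert a) :
  (contr_theta (fun _ : vert Q => 0%:Z) w)%:~R = 0 :> R.
Proof. by rewrite /contr_theta; case: ifP. Qed.

Lemma nabla_contr (x : arr Q -> R) :
  nabla (fun _ => 0%:Z) x ->
  @nabla R (contr_arr H) (contr_theta (fun _ => 0%:Z))
         (fun c : arr (contr_arr H) => x (val c)).
Proof.
move=> [x0 cx]; split=> [c|w]; first exact: x0.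
rewrite contr_theta0; apply/esym; rewrite -[LHS]/(net _ w) net_contr.
by apply: big1 => u _; rewrite /net -cx.
Qed.

Section Uncontract.
Variables (p : pred (arr Q)) (pa : ~~ p a).

Definition uncontract (y : arr (contr_arr H) -> R) (c : arr Q) : R :=
  oapp y (\sum_(d : arr (contr_arr H) | p (val d)) y d) (insub c : option {c | c != a}).

Lemma uncontract_val y (c : arr (contr_arr H)) : uncontract y (val c) = y c.
Proof. by rewrite /uncontract valK. Qed.

Lemma sum_uncontract y : \sum_(b | p b) uncontract y b = uncontract y a.
Proof.
rewrite (sumr_sig_neq a) (negPf pa) addr0 /uncontract insubF ?eqxx //=.
by apply: eq_bigr => c _; rewrite valK.
Qed.

Lemma uncontract_comb n (lam : 'I_n -> R) q :
  uncontract (affine_comb lam q) = affine_comb lam (fun i => uncontract (q i)).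
Proof.
apply: functional_extensionality_dep => c; rewrite /uncontract /affine_comb.
case: (insub c) => //=; rewrite exchange_big /=.
by apply: eq_bigr => i _; rewrite mulr_sumr.
Qed.

Lemma uncontract_contr (x : arr Q -> R) :
  x a = \sum_(b | p b) x b -> uncontract (fun c => x (val c)) = x.
Proof.
move=> xa; apply: functional_extensionality_dep => c.
rewrite /uncontract; case: insubP => [c' _ <- //| /negPn/eqP ->] /=.
by rewrite xa (sumr_sig_neq a) (negPf pa) addr0.
Qed.

Lemma lattice_uncontract y : lattice_pt y -> lattice_pt (uncontract y).
Proof.
move=> [z hz].
exists (fun c => oapp z (\sum_(d : arr (contr_arr H) | p (val d)) z d)
                   (insub c : option {c | c != a})) => c.
rewrite /uncontract; case: (insub c) => //=.
by rewrite rmorph_sum; apply: eq_bigr.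
Qed.

(* The endpoint [u] is where conservation is automatic after substituting
   [x a]; conservation at the glued vertex then gives it at the other endpoint. *)
Lemma nabla_uncontract (u : vert Q) :
  (u == src a) || (u == tgt a) ->
  (forall x : arr Q -> R, x a = \sum_(b | p b) x b -> net x u = 0) ->
  forall y, @nabla R (contr_arr H) (contr_theta (fun _ => 0%:Z)) y ->
            nabla (fun _ => 0%:Z) (uncontract y).
Proof.
move=> hu net_u y [y0 cy]; split=> [c|v].
  by rewrite /uncontract; case: (insub c) => //=; apply: sumr_ge0.
have fibre0 w : \sum_(u' | glue H u' == w) net (uncontract y) u' = 0.
  rewrite -net_contr.
  have -> : (fun c : arr (contr_arr H) => uncontract y (val c)) = y.
    by apply: functional_extensionality_dep => c; rewrite uncontract_val.
  by rewrite /net -cy contr_theta0.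
have ends : net (uncontract y) (src a) + net (uncontract y) (tgt a) = 0.
  by rewrite -sum_glue_fibre_pt fibre0.
have nu := net_u _ (esym (sum_uncontract y)).
have [ns nt] : net (uncontract y) (src a) = 0 /\ net (uncontract y) (tgt a) = 0.
  by case/orP: hu ends => /eqP <-; rewrite nu ?add0r ?addr0.
apply/esym; rewrite -[LHS]/(net (uncontract y) v).
have [-> //|vs] := eqVneq v (src a); have [-> //|vt] := eqVneq v (tgt a).
by rewrite -(sum_glue_fibre (net (uncontract y)) vs vt) fibre0.
Qed.

End Uncontract.

End Contraction.

Lemma contractable0_of (R : realType) (Q : quiver) (a : arr Q) (p : pred (arr Q))
    (u : vert Q) :
  src a != tgt a -> ~~ p a -> (u == src a) || (u == tgt a) ->
  (forall x : arr Q -> R, nabla (fun _ => 0%:Z) x -> x a = \sum_(b | p b) x b) ->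
  (forall x : arr Q -> R, x a = \sum_(b | p b) x b -> net x u = 0) ->
  contractable R (fun _ : vert Q => 0%:Z) a.
Proof.
move=> H pa hu xa net_u; exists H.
apply: (int_aff_equiv_of_inverse (f := fun x (c : arr (contr_arr H)) => x (val c))
                                  (g := uncontract (H := H) p)).
- by [].
- exact: uncontract_comb.
- exact: nabla_contr.
- exact: nabla_uncontract hu net_u.
- by move=> x hx; rewrite uncontract_contr // xa.
- by move=> y _; apply: functional_extensionality_dep => c; rewrite uncontract_val.
- by move=> x [z hz]; exists (fun c => z (val c)) => c; rewrite hz.
- exact: lattice_uncontract.
Qed.

Section Degrees.
Variables (R : realType) (Q : quiver).

(* Lets outgoing ([d = true]) and incoming ([d = false]) arrows be handled by
   one argument. *)
Definition arr_end (d : bool) : arr Q -> vert Q := if d then @src Q else @tgt Q.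

Lemma net_arr_end (x : arr Q -> R) (d : bool) (v : vert Q) :
  nabla (fun _ => 0%:Z) x ->
  \sum_(b | arr_end d b == v) x b = \sum_(b | arr_end (~~ d) b == v) x b.
Proof. by move=> [_ /(_ v) /esym /eqP]; rewrite subr_eq0 => /eqP; case: d. Qed.

Lemma flow_vanishes_off_loops (x : arr Q -> R) (d : bool) (v : vert Q) (b : arr Q) :
  nabla (fun _ => 0%:Z) x ->
  (forall a, arr_end d a == v -> arr_end (~~ d) a == v) ->
  arr_end (~~ d) b == v -> arr_end d b != v -> x b = 0.
Proof.
move=> hx loops bv bnv.
have loops_sum : \sum_(c | (arr_end (~~ d) c == v) && (arr_end d c == v)) x c =
                 \sum_(c | arr_end d c == v) x c.
  apply: eq_bigl => c.
  by case: (boolP (arr_end d c == v)) => [/loops ->|]; rewrite ?andbF.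
have : \sum_(c | (arr_end (~~ d) c == v) && ~~ (arr_end d c == v)) x c = 0.
  apply: (addrI (\sum_(c | arr_end d c == v) x c)).
  by rewrite addr0 -{1}loops_sum -bigID /= (net_arr_end d v hx).
by move/psumr_eq0P; apply=> [c _|]; [case: hx | rewrite bv bnv].
Qed.

Lemma isolated_vertex_unique (v : vert Q) :
  (forall u w : vert Q, connect (uadj Q) u w) ->
  (forall b : arr Q, (src b == v) = (tgt b == v)) -> forall u, u = v.
Proof.
move=> conn iso u.
have adj_v w : uadj Q v w -> w = v.
  case/existsP => b /orP [] /andP [/eqP sb /eqP tb]; apply/eqP.
    by rewrite -tb -iso sb.
  by rewrite -sb iso tb.
have /connectP [s pth ->] := conn v u.
by elim: s pth => //= z s IH /andP [/adj_v ->].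
Qed.

Lemma chi_connected (v : vert Q) :
  (forall u w : vert Q, connect (uadj Q) u w) ->
  chi Q = #|arr Q|%:Z - #|vert Q|%:Z + 1.
Proof.
move=> conn; rewrite /chi /ncomp.
have sym : connect_sym (uadj Q) by move=> x y; rewrite !conn.
rewrite (@eq_n_comp_r _ _ predT (connect (uadj Q) v)) ?n_comp_connect //.
by move=> x; rewrite !inE conn.
Qed.

Lemma chi_single_vertex (v : vert Q) : (forall u, u = v) -> chi Q = #|arr Q|%:Z.
Proof.
move=> single.
have conn u w : connect (uadj Q) u w by rewrite (single u) (single w) connect0.
rewrite (chi_connected v conn).
have -> : #|vert Q| = 1%N by apply: (@eq_card1 _ v) => u; rewrite !inE (single u) eqxx.
by rewrite subrK.
Qed.

Lemma two_le_deg (d : bool) (v : vert Q) :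
  (forall u w : vert Q, connect (uadj Q) u w) -> 2%:Z <= chi Q ->
  tight R (fun _ : vert Q => 0%:Z) ->
  (2 <= #|[set a | arr_end d a == v]|)%N.
Proof.
move=> conn chi2 tQ; rewrite leqNgt; apply/negP => deg_lt2.
case: (pickP (fun a => (arr_end d a == v) && (arr_end (~~ d) a != v)))
  => [a /andP [av anv] | loops].
- have Sa : [set a0 | arr_end d a0 == v] = [set a].
    apply/eqP; rewrite eq_sym eqEcard sub1set inE av cards1 /=.
    by rewrite -ltnS.
  have sum_S (x : arr Q -> R) : \sum_(b | arr_end d b == v) x b = x a.
    rewrite (big_pred1 a) // => b; rewrite -[LHS](in_set (fun b => arr_end d b == v)).
    by rewrite Sa inE.
  apply: (tQ a).2.
  apply: (contractable0_of (p := fun b => arr_end (~~ d) b == v) (u := v)).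
  + by move: av anv; case: (d) => /eqP <-; rewrite // eq_sym.
  + by [].
  + by move: av; case: (d) => /eqP <- /=; rewrite eqxx ?orbT.
  + by move=> x hx; rewrite -sum_S net_arr_end.
  + move=> x xa; rewrite /net; move: (sum_S x) xa; case: (d) => /= -> ->; exact: subrr.
- case: (pickP (fun b => (arr_end (~~ d) b == v) && (arr_end d b != v)))
    => [b /andP [bv bnv] | nonloops].
    apply: (tQ b).1; apply: removable_of_vanishing => x hx.
    apply: (flow_vanishes_off_loops hx _ bv bnv) => a av.
    by have := loops a; rewrite /= av /= => /negbFE.
  have iso c : (src c == v) = (tgt c == v).
    have := loops c; have := nonloops c.
    by case: (d) => /=; case: (src c == v); case: (tgt c == v).
  have single := isolated_vertex_unique conn iso.
  have S_full : [set a | arr_end d a == v] = setT.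
    by apply/setP => a; rewrite !inE (single (arr_end d a)) eqxx.
  by move: chi2 deg_lt2; rewrite (chi_single_vertex single) S_full cardsT; lia.
Qed.

End Degrees.

Lemma card_arr_sum_out (Q : quiver) :
  #|arr Q| = (\sum_(v : vert Q) #|[set a : arr Q | src a == v]|)%N.
Proof.
rewrite -sum1_card (partition_big (@src Q) xpredT) //=.
by apply: eq_bigr => v _; rewrite -sum1_card; apply: eq_bigl => a; rewrite !inE.
Qed.

Unset Implicit Arguments.

Theorem proposition7p1 (R : realType) (Q : quiver) :
  prime_quiver Q -> 2%:Z <= chi Q ->
  tight R (fun _ : vert Q => 0%:Z) ->
  (forall v : vert Q,
      (2 <= #|[set a : arr Q | src a == v]|)%N /\
      (2 <= #|[set a : arr Q | tgt a == v]|)%N) /\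
  ((#|vert Q|%:Z <= chi Q - 1) /\
   #|arr Q|%:Z = #|vert Q|%:Z + chi Q - 1 /\
   #|arr Q|%:Z <= 2%:Z * (chi Q - 1)).
Proof.
move=> [conn [arr_gt0 _]] chi2 tQ.
have deg v : (2 <= #|[set a : arr Q | src a == v]|)%N /\
             (2 <= #|[set a : arr Q | tgt a == v]|)%N.
  by split; [exact: (two_le_deg true v conn chi2 tQ)
            | exact: (two_le_deg false v conn chi2 tQ)].
split=> //.
have handshake : (2 * #|vert Q| <= #|arr Q|)%N.
  rewrite card_arr_sum_out mulnC -sum_nat_const.
  by apply: leq_sum => v _; exact: (deg v).1.
have /card_gt0P [a0 _] := arr_gt0.
by rewrite (chi_connected (src a0) conn); lia.
Qed.
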